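(* Let $X$ be a shift space, $Y$ an irreducible shift space, and $\phi : X \to Y$ a code. Then any two of the following conditions imply the third: (1) $\phi$ is open; (2) $\phi$ is constant-to-one; (3) $\phi$ is bi-closing.
   Context: Shift spaces are closed shift-invariant subsets of $\mathcal{A}^{\mathbb{Z}}$ ($\mathcal{A}$ finite); a code is a continuous shift-commuting map. $Y$ is irreducible if for all words $u,v$ occurring in $Y$ there is a word $w$ with $uwv$ occurring in $Y$. Open: images of open sets are open. Constant-to-one: every fiber $\phi^{-1}(y)$ is finite and $|\phi^{-1}(y)|$ does not depend on $y\in Y$. With metric $d(x,\bar x)=2^{-k}$, $k$ maximal with $x_{[-k,k]}=\bar x_{[-k,k]}$, points are left (resp. right) asymptotic if $d(\sigma^{-n}x,\sigma^{-n}\bar x)\to0$ (resp. $d(\sigma^{n}x,\sigma^{n}\bar x)\to0$). $\phi$ is right closing if it never identifies two distinct left asymptotic points, left closing if it never identifies two distinct right asymptotic points, bi-closing if both. *)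

From mathcomp Require Import all_boot.
From Stdlib Require Import ZArith List.
Set Implicit Arguments. Unset Strict Implicit. Unset Printing Implicit Defensive.

Definition point (A : Type) := Z -> A.

Definition shiftn (A : Type) (n : Z) (x : point A) : point A :=
  fun i => x (i + n)%Z.

(* x and y agree on the central block [-k,k]; d(x,y) <= 2^-k. *)
Definition agree (A : Type) (k : nat) (x y : point A) : Prop :=
  forall i : Z, (- Z.of_nat k <= i <= Z.of_nat k)%Z -> x i = y i.

Definition closed_set (A : Type) (X : point A -> Prop) : Prop :=
  forall x, (forall k : nat, exists y, X y /\ agree k x y) -> X x.

Definition shift_invariant (A : Type) (X : point A -> Prop) : Prop :=
  forall x, X x -> X (shiftn 1 x) /\ X (shiftn (-1) x).

Definition shift_space (A : finType) (X : point A -> Prop) : Prop :=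
  closed_set X /\ shift_invariant X.

Definition occurs (A : Type) (Y : point A -> Prop) (u : list A) : Prop :=
  exists y, Y y /\ exists i : Z,
    forall j : nat, (j < length u)%coq_nat -> forall d : A,
      y (i + Z.of_nat j)%Z = List.nth j u d.

Definition irreducible (A : Type) (Y : point A -> Prop) : Prop :=
  forall u v, occurs Y u -> occurs Y v ->
    exists w, occurs Y (u ++ w ++ v).

(* A code phi : X -> Y (phi is given on A^Z, only its restriction to X matters). *)
Definition code (A B : Type) (X : point A -> Prop) (Y : point B -> Prop)
  (phi : point A -> point B) : Prop :=
  (forall x, X x -> Y (phi x)) /\
  (forall x, X x -> phi (shiftn 1 x) = shiftn 1 (phi x)) /\
  (forall x, X x -> forall k : nat, exists m : nat,
      forall x', X x' -> agree m x x' -> agree k (phi x) (phi x')).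

Definition open_in (A : Type) (X U : point A -> Prop) : Prop :=
  (forall x, U x -> X x) /\
  (forall x, U x -> exists k : nat, forall x', X x' -> agree k x x' -> U x').

Definition image (A B : Type) (phi : point A -> point B) (U : point A -> Prop) :
  point B -> Prop := fun y => exists x, U x /\ phi x = y.

Definition open_map (A B : Type) (X : point A -> Prop) (Y : point B -> Prop)
  (phi : point A -> point B) : Prop :=
  forall U, open_in X U -> open_in Y (image phi U).

Definition fiber_card (A B : Type) (X : point A -> Prop)
  (phi : point A -> point B) (y : point B) (n : nat) : Prop :=
  exists l : list (point A), NoDup l /\ length l = n /\
    forall x, (X x /\ phi x = y) <-> In x l.

Definition constant_to_one (A B : Type) (X : point A -> Prop)
  (Y : point B -> Prop) (phi : point A -> point B) : Prop :=
  exists n : nat, forall y, Y y -> fiber_card X phi y n.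

Definition left_asymptotic (A : Type) (x x' : point A) : Prop :=
  forall k : nat, exists N : nat, forall n : nat, (N <= n)%coq_nat ->
    agree k (shiftn (- Z.of_nat n) x) (shiftn (- Z.of_nat n) x').

Definition right_asymptotic (A : Type) (x x' : point A) : Prop :=
  forall k : nat, exists N : nat, forall n : nat, (N <= n)%coq_nat ->
    agree k (shiftn (Z.of_nat n) x) (shiftn (Z.of_nat n) x').

Definition right_closing (A B : Type) (X : point A -> Prop)
  (phi : point A -> point B) : Prop :=
  forall x x', X x -> X x' -> x <> x' -> left_asymptotic x x' -> phi x <> phi x'.

Definition left_closing (A B : Type) (X : point A -> Prop)
  (phi : point A -> point B) : Prop :=
  forall x x', X x -> X x' -> x <> x' -> right_asymptotic x x' -> phi x <> phi x'.

Definition bi_closing (A B : Type) (X : point A -> Prop)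
  (phi : point A -> point B) : Prop :=
  right_closing X phi /\ left_closing X phi.

From Pilot Require Import Defs.
From mathcomp Require Import all_boot.
From Stdlib Require Import ZArith List Lia Classical ClassicalEpsilon FunctionalExtensionality.
From mathcomp Require Import zify.
Set Implicit Arguments. Unset Strict Implicit. Unset Printing Implicit Defensive.

(* A bi-closing code is uniformly closing: for some M, two points of a fibre that agree on
   [-M, M] are equal.  Hence fibres are finite and, by compactness of the full shift, fibre
   cardinality is upper semicontinuous; for an open code it is also lower semicontinuous,
   because openness lifts a whole fibre to every nearby fibre.  Locally constant fibre
   cardinality is constant on the irreducible space Y, as a single point of Y visits the
   neighbourhoods of any two points.  For a constant-to-one bi-closing code, points outside
   phi(U) arbitrarily close to phi(x) would have fibres accumulating on a whole fibre over
   phi(x), hence on x, which is interior to U.  For an open constant-to-one code, two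
   asymptotic points with the same image merge in the limit of their shifted fibre, and
   near that limit fibre phi is injective, since every nearby fibre is a lift of it. *)

Section Agreement.
Variable T : Type.
Implicit Types x y z : point T.

Lemma agree_le k k' x y : k <= k' -> agree k' x y -> agree k x y.
Proof. by move=> le_kk' Hxy i Hi; apply: Hxy; lia. Qed.

Lemma agree_refl k x : agree k x x.
Proof. by []. Qed.

Lemma agree_sym k x y : agree k x y -> agree k y x.
Proof. by move=> Hxy i Hi; rewrite Hxy. Qed.

Lemma agree_trans k x y z : agree k x y -> agree k y z -> agree k x z.
Proof. by move=> Hxy Hyz i Hi; rewrite Hxy ?Hyz. Qed.

Lemma agree_eq x y : (forall k, agree k x y) -> x = y.
Proof.
by move=> Hxy; apply: functional_extensionality => i; apply: (Hxy (Z.abs_nat i)); lia.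
Qed.

Lemma not_agree_of_neq x y : x <> y -> exists k, ~ agree k x y.
Proof.
move=> neq_xy; apply: NNPP => H; apply/neq_xy/agree_eq => k.
by apply: NNPP => ?; apply: H; exists k.
Qed.

Lemma shiftn_add a b x : shiftn a (shiftn b x) = shiftn (a + b) x.
Proof. by apply: functional_extensionality => i; rewrite /shiftn Z.add_assoc. Qed.

Lemma shiftn0 x : shiftn 0 x = x.
Proof. by apply: functional_extensionality => i; rewrite /shiftn Z.add_0_r. Qed.

Lemma shiftnK t x : shiftn (- t) (shiftn t x) = x.
Proof. by rewrite shiftn_add Z.add_opp_diag_l shiftn0. Qed.

Lemma shiftnVK t x : shiftn t (shiftn (- t) x) = x.
Proof. by rewrite shiftn_add Z.add_opp_diag_r shiftn0. Qed.

Lemma shiftn_inj t : injective (@shiftn T t).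
Proof. by move=> x y /(congr1 (shiftn (- t))); rewrite !shiftnK. Qed.

End Agreement.

Lemma injective_family_separated (T : Type) (I : finType) (f : I -> point T) :
  injective f -> exists R, forall i i', agree R (f i) (f i') -> i = i'.
Proof.
move=> inj_f.
have [k Hk] : exists k : I * I -> nat, forall p, p.1 <> p.2 -> ~ agree (k p) (f p.1) (f p.2).
  apply: (choice (fun p k => p.1 <> p.2 -> ~ agree k (f p.1) (f p.2))) => -[i i'] /=.
  have [<-|ne] := classic (i = i'); first by exists 0.
  by have [k Hk] := not_agree_of_neq (fun E => ne (inj_f _ _ E)); exists k.
exists (\max_(p : I * I) k p) => i i' Hii'; apply: NNPP => ne.
by apply: (Hk (i, i') ne); apply: agree_le Hii'; apply: leq_bigmax.
Qed.

Definition infinitely_often (P : nat -> Prop) : Prop :=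
  forall N, exists j, N <= j /\ P j.

Lemma infinitely_often_pigeonhole (T : finType) (P : nat -> Prop) (f : nat -> T) :
  infinitely_often P -> exists t, infinitely_often (fun j => P j /\ f j = t).
Proof.
move=> HP; apply: NNPP => Hno.
have [N HN] : exists N : T -> nat, forall t j, N t <= j -> P j -> f j <> t.
  apply: (choice (fun t n => forall j, n <= j -> P j -> f j <> t)) => t.
  apply: NNPP => Ht; apply: Hno; exists t => N; apply: NNPP => HN.
  by apply: Ht; exists N => j Hj Pj ftj; apply: HN; exists j.
have [j [Hj Pj]] := HP (\max_t N t).
by apply: (HN (f j) j _ Pj erefl); apply: leq_trans Hj; apply: leq_bigmax.
Qed.

Definition cluster_point (T I : Type) (s : nat -> I -> point T) (z : I -> point T) : Prop :=
  forall K N, exists j, N <= j /\ forall i, agree K (z i) (s j i).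

Section SequenceClusterPoint.
Variables (T : finType) (s : nat -> point T).

(* A diagonal argument: [cluster_indices m] is an infinite set of indices [j] on which
   [s j] is constant on [[-m+1, m-1]], and the next step fixes coordinates [m] and [-m]
   by pigeonhole. *)
Definition coords (m j : nat) : T * T := (s j (Z.of_nat m), s j (- Z.of_nat m)%Z).

Definition refine_coords (P : nat -> Prop) (m : nat) : T * T :=
  epsilon (inhabits (s 0 0%Z, s 0 0%Z))
    (fun c => infinitely_often (fun j => P j /\ coords m j = c)).

Fixpoint cluster_indices (m : nat) : nat -> Prop :=
  if m is m'.+1 then fun j => cluster_indices m' j /\
    coords m' j = refine_coords (cluster_indices m') m'
  else fun _ => True.

Lemma cluster_indices_inf m : infinitely_often (cluster_indices m).
Proof.
elim: m => [|m IHm] /=; first by move=> N; exists N.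
exact: (epsilon_spec _ (fun c => infinitely_often (fun j => _ /\ coords m j = c))
  (infinitely_often_pigeonhole (coords m) IHm)).
Qed.

Lemma cluster_indices_le m m' j :
  m <= m' -> cluster_indices m' j -> cluster_indices m j.
Proof.
elim: m' => [|m' IH]; first by rewrite leqn0 => /eqP ->.
by rewrite leq_eqVlt ltnS => /predU1P [-> //|/IH Hm] /= [/Hm].
Qed.

Definition seq_cluster_point : point T := fun i =>
  let c := refine_coords (cluster_indices (Z.abs_nat i)) (Z.abs_nat i) in
  if (0 <=? i)%Z then c.1 else c.2.

Lemma seq_cluster_pointP K N :
  exists j, N <= j /\ agree K seq_cluster_point (s j).
Proof.
have [j [Hj HK]] := cluster_indices_inf K.+1 N; exists j; split=> // i Hi.
have /= [_ Ecoords] : cluster_indices (Z.abs_nat i).+1 j by apply: cluster_indices_le HK; lia.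
rewrite /seq_cluster_point -Ecoords /coords.
by case: (Z.leb_spec 0 i) => Hi0 /=; congr (s j); lia.
Qed.

End SequenceClusterPoint.

Lemma cluster_point_exists (T I : finType) (s : nat -> I -> point T) :
  exists z, cluster_point s z.
Proof.
pose t j : point {ffun I -> T} := fun k => [ffun i => s j i k].
exists (fun i k => seq_cluster_point t k i) => K N.
have [j [Hj Hjt]] := seq_cluster_pointP t K N; exists j; split=> // i k Hk.
by rewrite (Hjt k Hk) ffunE.
Qed.

Lemma shift_space_shiftn (T : finType) (W : point T -> Prop) t x :
  shift_space W -> W x -> W (shiftn t x).
Proof.
move=> [_ Winv] Wx; elim/Z.peano_ind: t => [|t IHt|t IHt]; first by rewrite shiftn0.
- by rewrite -Z.add_1_l -shiftn_add; case: (Winv _ IHt).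
- by rewrite (_ : Z.pred t = -1 + t)%Z; [rewrite -shiftn_add; case: (Winv _ IHt)|lia].
Qed.

Definition asymptotic (T : Type) (s : Z) (x x' : point T) : Prop :=
  forall k, exists N, forall n, (N <= n)%coq_nat ->
    agree k (shiftn (s * Z.of_nat n) x) (shiftn (s * Z.of_nat n) x').

Lemma left_asymptoticE (T : Type) (x x' : point T) :
  left_asymptotic x x' <-> asymptotic (-1) x x'.
Proof.
have E n : (-1 * Z.of_nat n = - Z.of_nat n)%Z by lia.
by rewrite /asymptotic; setoid_rewrite E.
Qed.

Lemma right_asymptoticE (T : Type) (x x' : point T) :
  right_asymptotic x x' <-> asymptotic 1 x x'.
Proof. by rewrite /asymptotic; setoid_rewrite Z.mul_1_l. Qed.

Lemma asymptotic_of_ray (T : Type) s (x x' : point T) : (s = 1 \/ s = -1)%Z ->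
  (forall j : nat, 0 < j -> x (s * Z.of_nat j)%Z = x' (s * Z.of_nat j)%Z) ->
  asymptotic s x x'.
Proof.
move=> Hs Hray k; exists k.+1 => n Hn i Hi; rewrite /shiftn.
have -> : (i + s * Z.of_nat n = s * Z.of_nat (Z.to_nat (s * i + Z.of_nat n)))%Z
  by case: Hs => ->; lia.
by apply: Hray; case: Hs => ->; lia.
Qed.

Lemma In_mem (T : eqType) (x : T) (s : list T) : In x s <-> x \in s.
Proof.
elim: s => [|a s IHs] //=; rewrite seq.in_cons; split.
- by case=> [->|/IHs ->]; rewrite ?eqxx ?orbT.
- by case/orP=> [/eqP ->|/IHs]; auto.
Qed.

Lemma uniq_NoDup (T : eqType) (s : list T) : uniq s -> NoDup s.
Proof.
elim: s => [|a s IHs] /=; first by constructor.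
by move=> /andP [a_notin /IHs]; constructor=> // /In_mem; apply/negP.
Qed.

Lemma NoDup_map_enum (T : Type) (I : finType) (f : I -> T) :
  injective f -> NoDup (map f (enum I)) /\ length (map f (enum I)) = #|I|.
Proof.
move=> inj_f; split.
  by apply: NoDup_map_NoDup_ForallPairs (uniq_NoDup (enum_uniq I)) => i i' _ _ /inj_f.
by rewrite length_map cardE; elim: (enum I) => //= i s ->.
Qed.

Lemma exists_NoDup_list (T : Type) (l : list T) :
  exists l', NoDup l' /\ forall x, In x l <-> In x l'.
Proof.
elim: l => [|a l [l' [Hl' Hin]]]; first by exists nil; split; [constructor|].
have [a_in|a_notin] := classic (In a l').
  by exists l'; split=> // x /=; rewrite Hin; split=> [[<-|]|]; auto.
by exists (a :: l'); split; [constructor|move=> x /=; rewrite Hin].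
Qed.

Lemma finite_of_injection (T : Type) (U : finType) (P : T -> Prop) (f : T -> U) :
  (forall x x', P x -> P x' -> f x = f x' -> x = x') ->
  exists l, NoDup l /\ forall x, P x <-> In x l.
Proof.
move=> inj_f; have [[x0 Px0]|noP] := classic (exists x, P x); last first.
  by exists nil; split=> [|x]; [constructor|split=> // Px; apply: noP; exists x].
have [g Hg] : exists g : U -> T, forall u,
    P (g u) /\ ((exists x, P x /\ f x = u) -> f (g u) = u).
  apply: (choice (fun u w => P w /\ ((exists x, P x /\ f x = u) -> f w = u))) => u.
  have [[x [Px <-]]|nou] := classic (exists x, P x /\ f x = u); first by exists x.
  by exists x0; split=> // H; case: nou.
have [l [Hl Hin]] := exists_NoDup_list (map g (enum U)); exists l; split=> // x.
rewrite -Hin in_map_iff; split=> [Px|[u [<- _]]]; last exact: (Hg u).1.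
exists (f x); split; last by apply/In_mem; rewrite mem_enum.
by apply: inj_f => //; [exact: (Hg _).1 | apply: (Hg _).2; exists x].
Qed.

Definition central_block (T : Type) (M : nat) (x : point T) : {ffun 'I_(2 * M + 1) -> T} :=
  [ffun i : 'I_(2 * M + 1) => x (Z.of_nat i - Z.of_nat M)%Z].

Lemma central_block_agree (T : Type) M (x x' : point T) :
  central_block M x = central_block M x' -> agree M x x'.
Proof.
move=> E i Hi; have lt_iM : Z.to_nat (i + Z.of_nat M) < 2 * M + 1 by lia.
move: (congr1 (fun b : {ffun _ -> T} => b (Ordinal lt_iM)) E); rewrite !ffunE /=.
by rewrite (_ : Z.of_nat _ - Z.of_nat M = i)%Z; last lia.
Qed.

Lemma open_in_ball (T : Type) (W : point T -> Prop) R (c : point T) :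
  open_in W (fun x => W x /\ agree R c x).
Proof.
split=> [x [] //|x [_ Hx]]; exists R => x' Wx' Hxx'.
by split=> //; apply: agree_trans Hx Hxx'.
Qed.

Lemma lift_injective (T I : Type) (f g : I -> point T) R :
  (forall i i', agree R (f i) (f i') -> i = i') -> (forall i, agree R (f i) (g i)) ->
  injective g.
Proof.
move=> HR Hfg i i' Eg; apply: HR; apply: agree_trans (Hfg i) _.
by rewrite Eg; apply: agree_sym.
Qed.

Definition window (T : Type) (y : point T) (K : nat) : list T :=
  map (fun t => y (Z.of_nat t - Z.of_nat K)%Z) (List.seq 0 (2 * K + 1)).

Lemma window_length (T : Type) (y : point T) K : length (window y K) = (2 * K + 1)%coq_nat.
Proof. by rewrite length_map length_seq; lia. Qed.

Lemma window_nth (T : Type) (y : point T) K j d : (j < 2 * K + 1)%coq_nat ->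
  nth j (window y K) d = y (Z.of_nat j - Z.of_nat K)%Z.
Proof.
move=> lt_j; rewrite (nth_indep _ d (y (Z.of_nat 0 - Z.of_nat K)%Z)) ?window_length //.
by rewrite map_nth seq_nth.
Qed.

Lemma occurs_window (T : Type) (Y : point T -> Prop) y K : Y y -> occurs Y (window y K).
Proof.
move=> Yy; exists y; split=> //; exists (- Z.of_nat K)%Z => j; rewrite window_length => lt_j d.
by rewrite window_nth //; congr y; lia.
Qed.

Lemma agree_of_window (T : Type) (y z : point T) K i :
  (forall j d, (j < 2 * K + 1)%coq_nat -> z (i + Z.of_nat j)%Z = nth j (window y K) d) ->
  agree K y (shiftn (i + Z.of_nat K) z).
Proof.
move=> Hz t Ht; have lt_j : (Z.to_nat (t + Z.of_nat K) < 2 * K + 1)%coq_nat by lia.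
rewrite /shiftn (_ : t + (i + Z.of_nat K) = i + Z.of_nat (Z.to_nat (t + Z.of_nat K)))%Z; last lia.
by rewrite (Hz _ (y 0%Z) lt_j) window_nth //; congr y; lia.
Qed.

Lemma irreducible_visits (T : Type) (Y : point T -> Prop) y1 y2 K1 K2 :
  irreducible Y -> Y y1 -> Y y2 ->
  exists z t1 t2, Y z /\ agree K1 y1 (shiftn t1 z) /\ agree K2 y2 (shiftn t2 z).
Proof.
move=> Hirr Y1 Y2.
have [w [z [Yz [i Hz]]]] := Hirr _ _ (occurs_window K1 Y1) (occurs_window K2 Y2).
have len := window_length; rewrite !length_app in Hz.
exists z, (i + Z.of_nat K1)%Z, (i + Z.of_nat (length (window y1 K1 ++ w)) + Z.of_nat K2)%Z.
split=> //; split; apply: agree_of_window => j d lt_j.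
  by rewrite (Hz j _ d) ?app_nth1 ?len //; lia.
rewrite -Z.add_assoc -Nat2Z.inj_add (Hz _ _ d); first by rewrite catA; apply: app_nth2_plus.
by rewrite length_app !len; lia.
Qed.

Section Code.
Variables (A B : finType) (X : point A -> Prop) (Y : point B -> Prop)
  (phi : point A -> point B).
Hypotheses (HX : shift_space X) (Hc : code X Y phi).

Lemma code_shiftn t x : X x -> phi (shiftn t x) = shiftn t (phi x).
Proof.
case: Hc => _ [Hsh _] Xx; elim/Z.peano_ind: t => [|t IHt|t IHt]; first by rewrite !shiftn0.
- by rewrite -Z.add_1_l -!shiftn_add Hsh ?IHt //; apply: shift_space_shiftn.
- apply: (@shiftn_inj _ 1); rewrite -Hsh; last exact: shift_space_shiftn.
  by rewrite !shiftn_add (_ : 1 + Z.pred t = t)%Z; last lia.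
Qed.

Lemma cluster_point_in_X (I : Type) (s : nat -> I -> point A) z :
  (forall j i, X (s j i)) -> cluster_point s z -> forall i, X (z i).
Proof.
move=> Xs Hz i; apply: HX.1 => k.
by have [j [_ Hj]] := Hz k 0; exists (s j i).
Qed.

Lemma cluster_point_code (I : finType) (s : nat -> I -> point A) z :
  (forall j i, X (s j i)) -> cluster_point s z ->
  forall K N, exists j, N <= j /\
    forall i, agree K (z i) (s j i) /\ agree K (phi (z i)) (phi (s j i)).
Proof.
move=> Xs Hz K N; have Xz := cluster_point_in_X Xs Hz.
have [m Hm] : exists m : I -> nat, forall i x,
    X x -> agree (m i) (z i) x -> agree K (phi (z i)) (phi x).
  apply: (choice (fun i n => forall x, X x -> agree n (z i) x -> agree K (phi (z i)) (phi x))).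
  by move=> i; apply: Hc.2.2.
have [j [Hj Hzj]] := Hz (maxn K (\max_i m i)) N; exists j; split=> // i; split.
- by apply: agree_le (Hzj i); rewrite leq_maxl.
- apply: Hm (Xs j i) _; apply: agree_le (Hzj i).
  by rewrite leq_max leq_bigmax orbT.
Qed.

Lemma cluster_point_code_eq (I : finType) (s : nat -> I -> point A) z :
  (forall j i, X (s j i)) -> (forall j i i', phi (s j i) = phi (s j i')) ->
  cluster_point s z -> forall i i', phi (z i) = phi (z i').
Proof.
move=> Xs Hs Hz i i'; apply: agree_eq => k.
have [j [_ Hj]] := cluster_point_code Xs Hz k 0.
by apply: agree_trans (Hj i).2 _; rewrite (Hs j i i'); apply: agree_sym (Hj i').2.
Qed.

Definition closing (s : Z) : Prop :=
  forall x x', X x -> X x' -> x <> x' -> asymptotic s x x' -> phi x <> phi x'.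

Lemma bi_closingE : bi_closing X phi <-> closing (-1) /\ closing 1.
Proof.
rewrite /bi_closing /right_closing /left_closing /closing.
by setoid_rewrite left_asymptoticE; setoid_rewrite right_asymptoticE.
Qed.

(* Counterexamples for every [m] accumulate on two distinct [s]-asymptotic points with the
   same image. *)
Lemma closing_uniform s : (s = 1 \/ s = -1)%Z -> closing s ->
  exists m, forall x x', X x -> X x' -> phi x = phi x' ->
    (forall j, 0 < j <= m -> x (s * Z.of_nat j)%Z = x' (s * Z.of_nat j)%Z) ->
    x 0%Z = x' 0%Z.
Proof.
move=> Hs Hcl; apply: NNPP => Hno.
pose counterexample m (p : bool -> point A) := (forall b, X (p b)) /\ phi (p true) = phi (p false) /\
  (forall j, 0 < j <= m -> p true (s * Z.of_nat j)%Z = p false (s * Z.of_nat j)%Z) /\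
  p true 0%Z <> p false 0%Z.
have [p Hp] : exists p : nat -> bool -> point A, forall m, counterexample m (p m).
  apply: (choice counterexample) => m; apply: NNPP => Hm; apply: Hno; exists m.
  move=> x x' Xx Xx' Exx' Hray; apply: NNPP => ne0; apply: Hm.
  by exists (fun b => if b then x else x'); do !split=> //; case.
have [z Hz] := cluster_point_exists p.
have Xp j b : X (p j b) by case: (Hp j) => Xpj _; apply: Xpj.
have Ez : phi (z true) = phi (z false).
  by apply: (cluster_point_code_eq Xp _ Hz) => j [] [] //; case: (Hp j) => _ [E _]; rewrite E.
have ray j : 0 < j -> z true (s * Z.of_nat j)%Z = z false (s * Z.of_nat j)%Z.
  move=> Hj; have [j' [Hj' Hzj']] := Hz j j.
  have Hr : (- Z.of_nat j <= s * Z.of_nat j <= Z.of_nat j)%Z by case: Hs => ->; lia.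
  rewrite (Hzj' true _ Hr) (Hzj' false _ Hr).
  by case: (Hp j') => _ [_ [Hray _]]; apply: Hray; lia.
have ne0 : z true 0%Z <> z false 0%Z.
  have [j [_ Hzj]] := Hz 0 0.
  by rewrite (Hzj true) ?(Hzj false) //; case: (Hp j) => _ [_ [_ ne]].
by apply: (Hcl _ _ (cluster_point_in_X Xp Hz true) (cluster_point_in_X Xp Hz false)
  (fun E => ne0 (congr1 (fun w => w 0%Z) E)) (asymptotic_of_ray Hs ray)).
Qed.

(* Agreement on the [m] coordinates beyond [a] in direction [s] forces agreement at [a];
   iterating this spreads agreement on [-M, M] over the half-line opposite to [s]. *)
Lemma closing_agree_half s : (s = 1 \/ s = -1)%Z -> closing s ->
  exists m, forall M x x', m <= M -> X x -> X x' -> phi x = phi x' -> agree M x x' ->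
    forall i, (- Z.of_nat M <= - s * i)%Z -> x i = x' i.
Proof.
move=> Hs Hcl; have [m Hm] := closing_uniform Hs Hcl.
exists m => M x x' le_mM Xx Xx' Exx' HM.
suff Hn n : forall i, (- Z.of_nat M <= - s * i <= Z.of_nat M + Z.of_nat n)%Z -> x i = x' i.
  by move=> i Hi; apply: (Hn (Z.to_nat (- s * i))); lia.
elim: n => [|n IHn] i Hi; first by apply: HM; case: Hs Hi => ->; lia.
have [Hi'|Hi'] : (- s * i <= Z.of_nat M + Z.of_nat n \/ - s * i = Z.of_nat M + Z.of_nat n + 1)%Z
  by lia.
  by apply: IHn; lia.
apply: (Hm (shiftn i x) (shiftn i x')); try exact: shift_space_shiftn.
  by rewrite !code_shiftn // Exx'.
by move=> j Hj; apply: IHn; case: Hs Hi' => -> Hi'; lia.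
Qed.

Definition fiber_separated (M : nat) : Prop :=
  forall x x', X x -> X x' -> phi x = phi x' -> agree M x x' -> x = x'.

Lemma bi_closing_fiber_separated : bi_closing X phi -> exists M, fiber_separated M.
Proof.
move=> /bi_closingE [Hr Hl].
have [mr Hmr] := closing_agree_half (or_intror erefl) Hr.
have [ml Hml] := closing_agree_half (or_introl erefl) Hl.
exists (maxn mr ml) => x x' Xx Xx' Exx' HM; apply: functional_extensionality => i.
have [Hi|Hi] : (- Z.of_nat (maxn mr ml) <= - (-1) * i \/ - Z.of_nat (maxn mr ml) <= - 1 * i)%Z
  by lia.
- by apply: (Hmr _ x x' _ Xx Xx' Exx' HM) => //; rewrite leq_maxl.
- by apply: (Hml _ x x' _ Xx Xx' Exx' HM) => //; rewrite leq_maxr.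
Qed.

Lemma fiber_card_NoDup_le y n l : fiber_card X phi y n -> NoDup l ->
  (forall x, In x l -> X x /\ phi x = y) -> (length l <= n)%coq_nat.
Proof. by move=> [L [_ [<- HL]]] Hl Hin; apply: NoDup_incl_length Hl _ => x /Hin /HL. Qed.

Lemma fiber_card_NoDup_covers y n l : fiber_card X phi y n -> NoDup l ->
  (n <= length l)%coq_nat -> (forall x, In x l -> X x /\ phi x = y) ->
  forall x, X x -> phi x = y -> In x l.
Proof.
move=> [L [_ [<- HL]]] Hl len Hin x Xx Ex.
by apply: (NoDup_length_incl Hl len) => [w /Hin /HL|]; last exact/HL.
Qed.

Lemma fiber_card_unique y n n' : fiber_card X phi y n -> fiber_card X phi y n' -> n = n'.
Proof.
move=> Hn Hn'; apply: Nat.le_antisymm.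
- by case: (Hn) => [l [Hl [<- Hin]]]; apply: fiber_card_NoDup_le Hn' Hl _ => x /Hin.
- by case: (Hn') => [l [Hl [<- Hin]]]; apply: fiber_card_NoDup_le Hn Hl _ => x /Hin.
Qed.

Lemma family_card_le_fiber (I : finType) (f : I -> point A) y n :
  fiber_card X phi y n -> injective f -> (forall i, X (f i) /\ phi (f i) = y) -> #|I| <= n.
Proof.
move=> Hy inj_f Hf; have [Hl <-] := NoDup_map_enum inj_f; apply/leP.
by apply: fiber_card_NoDup_le Hy Hl _ => x /in_map_iff [i [<- _]].
Qed.

Lemma family_covers_fiber y n (f : 'I_n -> point A) :
  fiber_card X phi y n -> injective f -> (forall i, X (f i) /\ phi (f i) = y) ->
  forall x, X x -> phi x = y -> exists i, f i = x.
Proof.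
move=> Hy inj_f Hf x Xx Ex; have [Hl len] := NoDup_map_enum inj_f.
have /in_map_iff [i [fi _]] : In x (map f (enum 'I_n)).
  apply: (fiber_card_NoDup_covers Hy Hl) => //; first by rewrite len card_ord.
  by move=> w /in_map_iff [i [<- _]].
by exists i.
Qed.

Lemma fiber_family y n k : fiber_card X phi y n -> k <= n ->
  exists f : 'I_k -> point A, injective f /\ forall i, X (f i) /\ phi (f i) = y.
Proof.
move=> [l [Hl [len Hin]]]; case: k => [_|k le_kn].
  have f0 : 'I_0 -> point A by case=> m; rewrite ltn0.
  by exists f0; split; case.
case: l Hl len Hin => [|d l] Hl len Hin; first by rewrite -len in le_kn.
have lt_len (i : 'I_k.+1) : (i < length (d :: l))%coq_nat by move: (ltn_ord i); lia.
exists (fun i => nth i (d :: l) d); split=> [i i' E|i]; last by apply/Hin/nth_In.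
exact/val_inj/((NoDup_nth (d :: l) d).1 Hl _ _ (lt_len i) (lt_len i') E).
Qed.

Lemma fiber_card_exists M y : fiber_separated M -> exists n, fiber_card X phi y n.
Proof.
move=> Hsep.
have [|l [Hl Hin]] := @finite_of_injection _ _ (fun x => X x /\ phi x = y) (central_block M).
  by move=> x x' [Xx Ex] [Xx' Ex'] /central_block_agree; apply: Hsep => //; congruence.
by exists (length l), l.
Qed.

Lemma fiber_card_shiftn y n t : fiber_card X phi y n -> fiber_card X phi (shiftn t y) n.
Proof.
move=> [l [Hl [len Hin]]]; exists (map (shiftn t) l); split; [|split].
- by apply: NoDup_map_NoDup_ForallPairs Hl => x x' _ _; apply: shiftn_inj.
- by rewrite length_map.
move=> x; rewrite in_map_iff; split.
  move=> [Xx Ex]; exists (shiftn (- t) x); split; first exact: shiftnVK.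
  apply/Hin; split; first exact: shift_space_shiftn.
  by rewrite code_shiftn // Ex shiftnK.
move=> [w [<- /Hin [Xw Ew]]]; split; first exact: shift_space_shiftn.
by rewrite code_shiftn // Ew.
Qed.

Lemma fiber_limit M (I : finType) y (ys : nat -> point B) (s : nat -> I -> point A) z :
  fiber_separated M -> (forall j, agree j (ys j) y) ->
  (forall j i, X (s j i) /\ phi (s j i) = ys j) -> (forall j, injective (s j)) ->
  cluster_point s z -> injective z /\ forall i, X (z i) /\ phi (z i) = y.
Proof.
move=> Hsep Hys Hs inj_s Hz; have Xs j i : X (s j i) by case: (Hs j i).
split=> [i i' Ezi|i].
  have [j [_ Hj]] := Hz M 0; apply: (inj_s j); apply: Hsep; try exact: Xs.
    by rewrite (Hs j i).2 (Hs j i').2.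
  by apply: agree_trans (Hj i'); rewrite -Ezi; apply: agree_sym (Hj i).
split; first exact: cluster_point_in_X Xs Hz i.
apply: agree_eq => k; have [j [le_kj Hj]] := cluster_point_code Xs Hz k k.
by apply: agree_trans (Hj i).2 _; rewrite (Hs j i).2; apply: agree_le le_kj (Hys j).
Qed.

Lemma open_map_lift (I : finType) (f : I -> point A) y R : open_map X Y phi ->
  (forall i, X (f i) /\ phi (f i) = y) ->
  exists K, forall y', Y y' -> agree K y y' ->
    exists g : I -> point A, forall i, X (g i) /\ agree R (f i) (g i) /\ phi (g i) = y'.
Proof.
move=> Hopen Hf; pose lifts i y' x := X x /\ agree R (f i) x /\ phi x = y'.
have [K HK] : exists K : I -> nat, forall i y', Y y' -> agree (K i) y y' -> exists x, lifts i y' x.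
  apply: (choice (fun i k => forall y', Y y' -> agree k y y' -> exists x, lifts i y' x)) => i.
  have [Xfi Efi] := Hf i.
  have [_ Himg] := Hopen _ (open_in_ball X R (f i)).
  have [|k Hk] := Himg y; first by exists (f i); split=> //; split=> //; apply: agree_refl.
  by exists k => y' Yy' /(Hk y' Yy') [x [[Xx Hx] Ex]]; exists x.
exists (\max_i K i) => y' Yy' Hyy'.
apply: (choice (lifts^~ y')) => i; apply: HK Yy' _; apply: agree_le Hyy'; exact: leq_bigmax.
Qed.

Lemma constant_to_one_bi_closing_open :
  constant_to_one X Y phi -> bi_closing X phi -> open_map X Y phi.
Proof.
move=> [n Hn] /bi_closing_fiber_separated [M Hsep] U [UX Uopen]; split.
  by move=> _ [x [Ux <-]]; apply: Hc.1; apply: UX.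
move=> _ [x [Ux <-]]; have [k Hk] := Uopen x Ux; have Xx := UX x Ux.
apply: NNPP => Hno.
pose far K (p : point B * ('I_n -> point A)) := agree K p.1 (phi x) /\ ~ Defs.image phi U p.1 /\
  injective p.2 /\ forall i, X (p.2 i) /\ phi (p.2 i) = p.1.
have [p Hp] : exists p, forall K, far K (p K).
  apply: (choice far) => K; apply: NNPP => HK; apply: Hno; exists K => y' Yy' Hy'.
  apply: NNPP => Hy'U; have [f [inj_f Hf]] := fiber_family (Hn y' Yy') (leqnn n).
  by apply: HK; exists (y', f); split; [apply: agree_sym|].
have [z Hz] := cluster_point_exists (fun K => (p K).2).
have [inj_z Hzfib] := fiber_limit Hsep (fun K => (Hp K).1) (fun K => (Hp K).2.2.2)
  (fun K => (Hp K).2.2.1) Hz.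
have [i Ei] := family_covers_fiber (Hn _ (Hc.1 x Xx)) inj_z Hzfib Xx erefl.
have [K [_ HK]] := Hz k 0; have [_ [notU [_ HpK]]] := Hp K.
apply: notU; exists ((p K).2 i); split; last exact: (HpK i).2.
by apply: Hk; [exact: (HpK i).1 | rewrite -Ei; apply: HK].
Qed.

(* Lifting the fibre of [phi z0] by openness yields as many points as a fibre holds, so every
   point of a nearby fibre that is close to [z0] is the lift of [z0] itself. *)
Lemma open_constant_to_one_locally_injective z0 :
  open_map X Y phi -> constant_to_one X Y phi -> X z0 ->
  exists R, forall x1 x2, X x1 -> X x2 -> phi x1 = phi x2 ->
    agree R z0 x1 -> agree R z0 x2 -> agree R (phi z0) (phi x1) -> x1 = x2.
Proof.
move=> Hopen [n Hn] Xz0; have Yz0 := Hc.1 z0 Xz0.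
have [g [inj_g Hg]] := fiber_family (Hn _ Yz0) (leqnn n).
have [w Ew] := family_covers_fiber (Hn _ Yz0) inj_g Hg Xz0 erefl.
have [R HR] := injective_family_separated inj_g.
have [K HK] := open_map_lift R Hopen Hg.
exists (maxn R K) => x1 x2 Xx1 Xx2 Ex12 Hx1 Hx2 Hphi.
have [|h Hh] := HK (phi x1) (Hc.1 x1 Xx1); first by apply: agree_le Hphi; rewrite leq_maxr.
have inj_h := lift_injective HR (fun i => (Hh i).2.1).
have Hhfib i : X (h i) /\ phi (h i) = phi x1 by case: (Hh i) => ? [].
suff lift_w x' : X x' -> phi x' = phi x1 -> agree (maxn R K) z0 x' -> x' = h w.
  by rewrite (lift_w x1 Xx1 erefl Hx1) (lift_w x2 Xx2 (esym Ex12) Hx2).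
move=> Xx' Ex'; have [v <-] := family_covers_fiber (Hn _ (Hc.1 x1 Xx1)) inj_h Hhfib Xx' Ex'.
move=> Hx'; congr h; apply: HR; rewrite Ew; apply: agree_trans (Hh v).2.1 _.
by apply: agree_sym; apply: agree_le Hx'; rewrite leq_maxl.
Qed.

Lemma open_constant_to_one_closing s :
  open_map X Y phi -> constant_to_one X Y phi -> closing s.
Proof.
move=> Hopen Hct x x' Xx Xx' ne_xx' Has Exx'; have [n Hn] := Hct.
have [f [inj_f Hf]] := fiber_family (Hn _ (Hc.1 x Xx)) (leqnn n).
have [i Ei] := family_covers_fiber (Hn _ (Hc.1 x Xx)) inj_f Hf Xx erefl.
have [i' Ei'] := family_covers_fiber (Hn _ (Hc.1 x Xx)) inj_f Hf Xx' (esym Exx').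
pose sf j b := shiftn (s * Z.of_nat j) (f b).
have Xsf j b : X (sf j b) by apply: shift_space_shiftn; case: (Hf b).
have Esf j b : phi (sf j b) = shiftn (s * Z.of_nat j) (phi x).
  by case: (Hf b) => Xfb Efb; rewrite code_shiftn // Efb.
have [z Hz] := cluster_point_exists sf.
have Ezii' : z i = z i'.
  apply: agree_eq => k; have [N HN] := Has k; have [j [le_Nj Hj]] := Hz k N.
  apply: agree_trans (Hj i) (agree_trans _ (agree_sym (Hj i'))).
  by rewrite /sf Ei Ei'; apply: HN; apply/leP.
have [R HR] := open_constant_to_one_locally_injective Hopen Hct (cluster_point_in_X Xsf Hz i).
have [j [_ Hj]] := cluster_point_code Xsf Hz R 0.
apply: ne_xx'; rewrite -Ei -Ei'; apply: (@shiftn_inj _ (s * Z.of_nat j)).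
apply: HR; try exact: Xsf.
- exact: etrans (Esf j i) (esym (Esf j i')).
- exact: (Hj i).1.
- by rewrite Ezii'; apply: (Hj i').1.
- exact: (Hj i).2.
Qed.

Lemma open_constant_to_one_bi_closing :
  open_map X Y phi -> constant_to_one X Y phi -> bi_closing X phi.
Proof.
by move=> Hopen Hct; apply/bi_closingE; split; apply: open_constant_to_one_closing.
Qed.

Lemma open_fiber_card_ge y n : open_map X Y phi -> fiber_card X phi y n ->
  exists K, forall y' n', Y y' -> agree K y y' -> fiber_card X phi y' n' -> n <= n'.
Proof.
move=> Hopen Hy; have [f [inj_f Hf]] := fiber_family Hy (leqnn n).
have [R HR] := injective_family_separated inj_f.
have [K HK] := open_map_lift R Hopen Hf.
exists K => y' n' Yy' Hyy' Hy'; have [g Hg] := HK y' Yy' Hyy'.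
rewrite -[n]card_ord; apply: family_card_le_fiber Hy' _ (fun i => conj (Hg i).1 (Hg i).2.2).
exact: lift_injective HR (fun i => (Hg i).2.1).
Qed.

Lemma separated_fiber_card_le M y n : fiber_separated M -> fiber_card X phi y n ->
  exists K, forall y' n', Y y' -> agree K y y' -> fiber_card X phi y' n' -> n' <= n.
Proof.
move=> Hsep Hy; apply: NNPP => Hno.
pose crowded K (p : point B * ('I_n.+1 -> point A)) :=
  agree K p.1 y /\ injective p.2 /\ forall i, X (p.2 i) /\ phi (p.2 i) = p.1.
have [p Hp] : exists p, forall K, crowded K (p K).
  apply: (choice crowded) => K; apply: NNPP => HK; apply: Hno; exists K => y' n' Yy' Hyy' Hy'.
  case: (leqP n' n) => // lt_nn'; have [f [inj_f Hf]] := fiber_family Hy' lt_nn'.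
  by case: HK; exists (y', f); split; [apply: agree_sym|].
have [z Hz] := cluster_point_exists (fun K => (p K).2).
have [inj_z Hzfib] := fiber_limit Hsep (fun K => (Hp K).1) (fun K => (Hp K).2.2)
  (fun K => (Hp K).2.1) Hz.
by have := family_card_le_fiber Hy inj_z Hzfib; rewrite card_ord ltnn.
Qed.

Lemma fiber_card_locally_constant M y n :
  open_map X Y phi -> fiber_separated M -> fiber_card X phi y n ->
  exists K, forall y', Y y' -> agree K y y' -> fiber_card X phi y' n.
Proof.
move=> Hopen Hsep Hy.
have [K1 HK1] := open_fiber_card_ge Hopen Hy; have [K2 HK2] := separated_fiber_card_le Hsep Hy.
exists (maxn K1 K2) => y' Yy' Hyy'; have [n' Hy'] := fiber_card_exists y' Hsep.
suff -> : n = n' by [].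
apply/eqP; rewrite eqn_leq (HK1 y' n') ?(HK2 y' n') //; apply: agree_le Hyy';
  by rewrite ?leq_maxl ?leq_maxr.
Qed.

Lemma open_bi_closing_constant_to_one : shift_space Y -> irreducible Y ->
  open_map X Y phi -> bi_closing X phi -> constant_to_one X Y phi.
Proof.
move=> HY Hirr Hopen /bi_closing_fiber_separated [M Hsep].
have card_eq y1 y2 n1 n2 : Y y1 -> Y y2 ->
    fiber_card X phi y1 n1 -> fiber_card X phi y2 n2 -> n1 = n2.
  move=> Y1 Y2 H1 H2.
  have [K1 HK1] := fiber_card_locally_constant Hopen Hsep H1.
  have [K2 HK2] := fiber_card_locally_constant Hopen Hsep H2.
  have [z [t1 [t2 [Yz [Hz1 Hz2]]]]] := irreducible_visits K1 K2 Hirr Y1 Y2.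
  have := fiber_card_shiftn (- t1) (HK1 _ (shift_space_shiftn t1 HY Yz) Hz1).
  have := fiber_card_shiftn (- t2) (HK2 _ (shift_space_shiftn t2 HY Yz) Hz2).
  by rewrite !shiftnK => Hz2' Hz1'; apply: fiber_card_unique Hz1' Hz2'.
have [[y0 Yy0]|noY] := classic (exists y, Y y); last by exists 0 => y Yy; case: noY; exists y.
have [n0 Hn0] := fiber_card_exists y0 Hsep; exists n0 => y Yy.
by have [n Hn] := fiber_card_exists y Hsep; rewrite (card_eq _ _ _ _ Yy0 Yy Hn0 Hn).
Qed.

End Code.

Theorem theorem4p5 (A B : finType) (X : point A -> Prop) (Y : point B -> Prop)
  (phi : point A -> point B) :
  shift_space X -> shift_space Y -> irreducible Y -> code X Y phi ->
  ((open_map X Y phi /\ constant_to_one X Y phi -> bi_closing X phi) /\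
   (open_map X Y phi /\ bi_closing X phi -> constant_to_one X Y phi) /\
   (constant_to_one X Y phi /\ bi_closing X phi -> open_map X Y phi)).
Proof.
move=> HX HY Hirr Hc; split; last split; case.
- exact: open_constant_to_one_bi_closing.
- exact: open_bi_closing_constant_to_one.
- exact: constant_to_one_bi_closing_open.
Qed.
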